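(* For any $n\in\mathbb{Z}$, the group $\langle a,b\mid aba=ba^{n+1}b\rangle$ is isomorphic to the braid group $\mathbb{B}_3$ on three strands.
   Context: $\mathbb{B}_3=\langle x,y\mid xyx=yxy\rangle$ is the Artin braid group on three strands. *)

(* Finitely presented groups on two generators, modelled
   honestly as words in the free monoid on the generators and their formal
   inverses, modulo the congruence generated by free cancellation and the
   defining relations. *)
From mathcomp Require Import all_boot all_order all_algebra.
Set Implicit Arguments. Unset Strict Implicit. Unset Printing Implicit Defensive.
Import GRing.Theory Num.Theory.

(* A letter is (generator, inverted?); generator false = first, true = second. *)
Definition letter := (bool * bool)%type.
Definition word := seq letter.

Definition inv_letter (x : letter) : letter := (x.1, ~~ x.2).
Definition winv (w : word) : word := rev (map inv_letter w).

Definition gen1 : word := [:: (false, false)].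
Definition gen2 : word := [:: (true, false)].

Definition wpow (w : word) (k : int) : word :=
  match k with
  | Posz m => flatten (nseq m w)
  | Negz m => flatten (nseq m.+1 (winv w))
  end.

Inductive peq (rels : seq (word * word)) : word -> word -> Prop :=
| peq_refl w : peq rels w w
| peq_sym u v : peq rels u v -> peq rels v u
| peq_trans u v w : peq rels u v -> peq rels v w -> peq rels u w
| peq_cancel u v (x : letter) :
    peq rels (u ++ [:: x; inv_letter x] ++ v) (u ++ v)
| peq_rel u v l r : (l, r) \in rels ->
    peq rels (u ++ l ++ v) (u ++ r ++ v).

(* The presented groups <gen1,gen2 | R> and <gen1,gen2 | S> are isomorphic:
   there is a map on words that descends to a bijective group homomorphism
   between the quotients (well defined, multiplicative, injective, surjective). *)
Definition pres_iso (R S : seq (word * word)) : Prop :=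
  exists f : word -> word,
    [/\ (forall u v, peq R u v -> peq S (f u) (f v)),
        (forall u v, peq S (f (u ++ v)) (f u ++ f v)),
        (forall u v, peq S (f u) (f v) -> peq R u v)
      & (forall w, exists u, peq S (f u) w)].

Definition braid3_rels : seq (word * word) :=
  [:: (gen1 ++ gen2 ++ gen1, gen2 ++ gen1 ++ gen2)].

Definition G_rels (n : int) : seq (word * word) :=
  [:: (gen1 ++ gen2 ++ gen1, gen2 ++ wpow gen1 (n + 1) ++ gen2)].

(* The substitutions  a |-> x, b |-> y x^-n  and  x |-> a, y |-> b a^n  are
   inverse to each other on the generators, and both respect the relations:
     a b a |-> x y x^-n x = x y x x^-n = y x y x^-n <-| b a^(n+1) b,
     x y x |-> a b a^(n+1) = b a^(n+1) b a^n <-| y x y,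
   using the braid relation, resp. the defining relation, in the middle. *)
From mathcomp Require Import all_boot all_order all_algebra.
From mathcomp Require Import zify.
From Stdlib Require Import Setoid Morphisms.
Set Implicit Arguments. Unset Strict Implicit. Unset Printing Implicit Defensive.
Import GRing.Theory.
Local Open Scope ring_scope.

Lemma inv_letterK : involutive inv_letter.
Proof. by case=> g e; rewrite /inv_letter negbK. Qed.

Lemma winv_cat u v : winv (u ++ v) = winv v ++ winv u.
Proof. by rewrite /winv map_cat rev_cat. Qed.

Lemma winvK : involutive winv.
Proof. by move=> w; rewrite /winv map_rev revK -map_comp (eq_map inv_letterK) map_id. Qed.

Lemma wpow0 w : wpow w 0 = [::].
Proof. by []. Qed.

Lemma wpow1 w : wpow w 1 = w.
Proof. exact: cats0. Qed.

#[local] Hint Resolve peq_refl : core.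

#[local] Instance peq_Equivalence rels : Equivalence (peq rels).
Proof. by split; [exact: peq_refl | exact: peq_sym | exact: peq_trans]. Qed.

Lemma peq_ctx rels p q u v : peq rels u v -> peq rels (p ++ u ++ q) (p ++ v ++ q).
Proof.
elim=> {u v} [w|u v _ IH|u v w _ IH1 _ IH2|u v x|u v l r Hlr].
- reflexivity.
- by symmetry.
- by transitivity (p ++ v ++ q).
- by have := peq_cancel rels (p ++ u) (v ++ q) x; rewrite -!catA.
- by have := peq_rel (p ++ u) (v ++ q) Hlr; rewrite -!catA.
Qed.

#[local] Instance cat_Proper rels :
  Proper (peq rels ==> peq rels ==> peq rels) (@cat letter).
Proof.
move=> u u' Hu v v' Hv; transitivity (u' ++ v).
- by have := peq_ctx [::] v Hu.
- by have := peq_ctx u' [::] Hv; rewrite !cats0.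
Qed.

#[local] Instance cons_Proper rels :
  Proper (eq ==> peq rels ==> peq rels) (@cons letter).
Proof. by move=> x _ <- u v Huv; have := peq_ctx [:: x] [::] Huv; rewrite !cats0. Qed.

Section PresentedGroup.
Variable rels : seq (word * word).
Local Infix "=R" := (peq rels) (at level 70, no associativity).

Lemma peq_rel_catr l r w : (l, r) \in rels -> l ++ w =R r ++ w.
Proof. exact: peq_rel [::] w l r. Qed.

Lemma catwV w : w ++ winv w =R [::].
Proof.
elim: w => [|x w IH] /=; first reflexivity.
have -> : winv (x :: w) = winv w ++ [:: inv_letter x] by rewrite -cat1s winv_cat.
rewrite catA IH; exact: (peq_cancel rels [::] [::] x).
Qed.

Lemma catVw w : winv w ++ w =R [::].
Proof. by have := catwV (winv w); rewrite winvK. Qed.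

Lemma peq_winv u v : u =R v -> winv u =R winv v.
Proof.
move=> Huv; transitivity (winv u ++ v ++ winv v).
- by rewrite catwV cats0.
- by rewrite -{1}Huv catA catVw.
Qed.

Lemma flatten_nseqSr (w : word) m : flatten (nseq m.+1 w) = flatten (nseq m w) ++ w.
Proof. by rewrite -addn1 nseqD flatten_cat /= cats0. Qed.

Lemma wpow_addr1 w k : wpow w (k + 1) =R wpow w k ++ w.
Proof.
case: k => [m|[|m]].
- have -> : Posz m + 1 = Posz m.+1 by lia.
  by rewrite /wpow flatten_nseqSr.
- have -> : Negz 0 + 1 = 0 by lia.
  by rewrite /wpow /= cats0 catVw.
- have -> : Negz m.+1 + 1 = Negz m by lia.
  by rewrite /wpow [flatten (nseq m.+2 _)]flatten_nseqSr -catA catVw cats0.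
Qed.

Lemma wpow_subr1 w k : wpow w (k - 1) =R wpow w k ++ winv w.
Proof. by rewrite -{2}(subrK 1 k) wpow_addr1 -catA catwV cats0. Qed.

Lemma wpowD w a b : wpow w a ++ wpow w b =R wpow w (a + b).
Proof.
elim/int_rect: b => [|m IH|m IH].
- by rewrite addr0 cats0.
- have -> : Posz m.+1 = m%:Z + 1 by lia.
  by rewrite addrA !wpow_addr1 catA IH.
- have -> : - Posz m.+1 = - m%:Z - 1 by lia.
  by rewrite addrA !wpow_subr1 catA IH.
Qed.

Lemma wpow_catC w k : wpow w k ++ w =R w ++ wpow w k.
Proof. by rewrite -{2 3}(wpow1 w) !wpowD addrC. Qed.

End PresentedGroup.

#[local] Instance winv_Proper rels : Proper (peq rels ==> peq rels) winv :=
  @peq_winv rels.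

Definition wsubst_letter (s : bool -> word) (x : letter) : word :=
  if x.2 then winv (s x.1) else s x.1.

Definition wsubst (s : bool -> word) (u : word) : word :=
  flatten (map (wsubst_letter s) u).

Section Substitution.
Variable s : bool -> word.

Lemma wsubst_cat u v : wsubst s (u ++ v) = wsubst s u ++ wsubst s v.
Proof. by rewrite /wsubst map_cat flatten_cat. Qed.

Lemma wsubst_gen g : wsubst s [:: (g, false)] = s g.
Proof. exact: cats0. Qed.

Lemma wsubst_letterV x : wsubst_letter s (inv_letter x) = winv (wsubst_letter s x).
Proof. by case: x => g [|]; rewrite /wsubst_letter /= ?winvK. Qed.

Lemma wsubst_winv u : wsubst s (winv u) = winv (wsubst s u).
Proof.
elim: u => [|x u IH] //.
rewrite -cat1s winv_cat !wsubst_cat IH winv_cat /winv /=.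
by rewrite /wsubst /= !cats0 wsubst_letterV.
Qed.

Lemma wsubst_wpow w k : wsubst s (wpow w k) = wpow (wsubst s w) k.
Proof.
have wsubst_flatten_nseq v m :
    wsubst s (flatten (nseq m v)) = flatten (nseq m (wsubst s v)).
  by elim: m => [|m IH] //=; rewrite wsubst_cat IH.
by case: k => m; rewrite /wpow wsubst_flatten_nseq ?wsubst_winv.
Qed.

Lemma peq_wsubst R S :
  (forall l r, (l, r) \in R -> peq S (wsubst s l) (wsubst s r)) ->
  forall u v, peq R u v -> peq S (wsubst s u) (wsubst s v).
Proof.
move=> sR u v; elim=> {u v} [w|u v _ IH|u v w _ IH1 _ IH2|u v x|u v l r Hlr].
- reflexivity.
- by symmetry.
- by transitivity (wsubst s v).
- by rewrite !wsubst_cat [wsubst s (_ :: _)]/wsubst /= wsubst_letterV cats0 catwV.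
- by rewrite !wsubst_cat (sR _ _ Hlr).
Qed.

End Substitution.

Lemma wsubst_wsubstK R s t :
  (forall g, peq R (wsubst t (s g)) [:: (g, false)]) ->
  forall u, peq R (wsubst t (wsubst s u)) u.
Proof.
move=> ts; elim=> [|[g e] u IH] //.
rewrite -cat1s !wsubst_cat IH cats0.
by case: e; rewrite /wsubst_letter /= ?wsubst_winv ts.
Qed.

Lemma pres_iso_wsubst R S s t :
  (forall l r, (l, r) \in R -> peq S (wsubst s l) (wsubst s r)) ->
  (forall l r, (l, r) \in S -> peq R (wsubst t l) (wsubst t r)) ->
  (forall g, peq R (wsubst t (s g)) [:: (g, false)]) ->
  (forall g, peq S (wsubst s (t g)) [:: (g, false)]) ->
  pres_iso R S.
Proof.
move=> sR tS ts st; exists (wsubst s); split.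
- exact: peq_wsubst.
- by move=> u v; rewrite wsubst_cat.
- move=> u v /(peq_wsubst tS) Huv.
  by rewrite -(wsubst_wsubstK ts u) Huv wsubst_wsubstK.
- by move=> w; exists (wsubst t w); exact: wsubst_wsubstK.
Qed.

Definition toB3 (n : int) (g : bool) : word :=
  if g then gen2 ++ wpow gen1 (- n) else gen1.

Definition toG (n : int) (g : bool) : word :=
  if g then gen2 ++ wpow gen1 n else gen1.

Section BraidPresentation.
Variable n : int.
Local Notation X := (wpow gen1).

Lemma braid3_relE w :
  peq braid3_rels (gen2 ++ gen1 ++ gen2 ++ w) (gen1 ++ gen2 ++ gen1 ++ w).
Proof.
by symmetry; have := @peq_rel_catr braid3_rels _ _ w (mem_head _ _); rewrite -!catA.
Qed.

Lemma G_relE w :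
  peq (G_rels n) (gen1 ++ gen2 ++ gen1 ++ w) (gen2 ++ X (n + 1) ++ gen2 ++ w).
Proof. by have := @peq_rel_catr (G_rels n) _ _ w (mem_head _ _); rewrite -!catA. Qed.

Lemma toB3_rel l r : (l, r) \in G_rels n ->
  peq braid3_rels (wsubst (toB3 n) l) (wsubst (toB3 n) r).
Proof.
rewrite inE xpair_eqE => /andP [/eqP -> /eqP ->].
rewrite !wsubst_cat wsubst_wpow !wsubst_gen /toB3 -!catA.
rewrite (catA (X (- n))) wpowD addKr wpow1 braid3_relE.
by rewrite wpow_catC.
Qed.

Lemma toG_rel l r : (l, r) \in braid3_rels ->
  peq (G_rels n) (wsubst (toG n) l) (wsubst (toG n) r).
Proof.
rewrite inE xpair_eqE => /andP [/eqP -> /eqP ->].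
rewrite !wsubst_cat !wsubst_gen /toG -!catA.
by rewrite wpow_catC G_relE (catA (X n)) -wpow_addr1.
Qed.

Lemma toG_toB3 g : peq (G_rels n) (wsubst (toG n) (toB3 n g)) [:: (g, false)].
Proof.
case: g; last by rewrite wsubst_gen.
by rewrite wsubst_cat wsubst_wpow !wsubst_gen -catA wpowD addrN wpow0 cats0.
Qed.

Lemma toB3_toG g : peq braid3_rels (wsubst (toB3 n) (toG n g)) [:: (g, false)].
Proof.
case: g; last by rewrite wsubst_gen.
by rewrite wsubst_cat wsubst_wpow !wsubst_gen -catA wpowD addNr wpow0 cats0.
Qed.

End BraidPresentation.

Theorem mainTheorem8 (n : int) : pres_iso (G_rels n) braid3_rels.
Proof.
exact: pres_iso_wsubst (@toB3_rel n) (@toG_rel n) (@toG_toB3 n) (@toB3_toG n).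
Qed.
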